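(* Let $A\in\mathcal{PM}(n)$ be the poset matrix of an NL poset $P$ on $X_n$, let $T$ be the set of order ideals of $P$, let $S\in T$, and let $v\in\{0,1\}^n$ be the characteristic vector of $S$. Then $$\mathrm{Grow}_S(T)=\mathcal I(P_{A^v}),$$ the set of order ideals of the NL poset on $X_{n+1}$ whose poset matrix is $A^v=\begin{bmatrix}A&\mathbf 0\\ v&1\end{bmatrix}$.
   Context: Let $X_n=\{0,1,\ldots,n-1\}$. A naturally labeled (NL) poset on $X_n$ is a partial order $\preceq$ on $X_n$ such that $x\preceq y$ implies $x\le y$ in the usual integer order. Its poset matrix is the $n\times n$ $(0,1)$-matrix $A=(a_{i,j})_{i,j\in X_n}$ with $a_{i,j}=1$ if $j\preceq i$ and $0$ otherwise; $\mathcal{PM}(n)$ is the set of all such matrices. An order ideal is a downward closed subset. For a family $T$ of subsets of $X_n$ (closed under union and intersection, containing $\emptyset$ and $X_n$) and $S\in T$, $\mathrm{Grow}_S(T)$ is the family of subsets of $X_{n+1}$ obtained by doubling the interval $[S,X_n]$ of $T$, namely $\mathrm{Grow}_S(T)=T\cup\{U\cup\{n\}: U\in T,\ S\subseteq U\}$. *)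

From mathcomp Require Import all_boot all_algebra.
Set Implicit Arguments. Unset Strict Implicit. Unset Printing Implicit Defensive.

(* A (0,1)-matrix is represented as a boolean matrix 'M[bool]_n indexed by
   'I_n = X_n.  A i j = true  means  a_{i,j} = 1, i.e.  j ⪯ i. *)

Definition is_poset_matrix (n : nat) (A : 'M[bool]_n) : Prop :=
  [/\ (forall i, A i i),
      (forall i j, A i j -> A j i -> i = j),
      (forall i j k, A i j -> A j k -> A i k) &
      (forall i j : 'I_n, A i j -> (j <= i)%N)].

Definition is_order_ideal (n : nat) (A : 'M[bool]_n) (S : {set 'I_n}) : bool :=
  [forall i, forall j, (i \in S) && A i j ==> (j \in S)].

Definition ideals (n : nat) (A : 'M[bool]_n) : {set {set 'I_n}} :=
  [set S | is_order_ideal A S].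

Definition charvec (n : nat) (S : {set 'I_n}) : 'rV[bool]_n :=
  \row_j (j \in S).

Definition extmx (n : nat) (A : 'M[bool]_n) (v : 'rV[bool]_n) : 'M[bool]_(n + 1) :=
  block_mx A (const_mx false) v (const_mx true).

(* X_n is embedded in X_{n+1} = 'I_(n+1) via lshift; the new element n is
   rshift n ord0. *)
Definition embed (n : nat) (U : {set 'I_n}) : {set 'I_(n + 1)} :=
  [set lshift 1 i | i in U].

Definition newpt (n : nat) : 'I_(n + 1) := rshift n (@ord0 0).

Definition Grow (n : nat) (S : {set 'I_n}) (T : {set {set 'I_n}})
  : {set {set 'I_(n + 1)}} :=
  [set embed U | U in T] :|: [set newpt n |: embed U | U in [set U in T | S \subset U]].

From mathcomp Require Import all_boot all_algebra.
Set Implicit Arguments. Unset Strict Implicit. Unset Printing Implicit Defensive.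

(* A subset U of X_{n+1} is determined by its trace on X_n and by whether it
   contains n.  In A^v the row of n is v and its column is zero, so U is an
   ideal of A^v exactly when its trace is an ideal of A and, if n is in U, the
   trace contains the support S of v.  These are precisely the members of
   Grow_S(T).  That A^v is again a poset matrix needs S to be an ideal only
   for transitivity through the new top row. *)

Lemma ord_addn1_ind n (P : 'I_(n + 1) -> Prop) :
  (forall i, P (lshift 1 i)) -> P (newpt n) -> forall k, P k.
Proof.
move=> Plo Pnew k; case: (split_ordP k) => [i -> | j ->] //.
by rewrite (ord1 j).
Qed.

Section ExtendedMatrix.

Variables (n : nat) (A : 'M[bool]_n) (v : 'rV[bool]_n).

Lemma extmx_lshift i j : extmx A v (lshift 1 i) (lshift 1 j) = A i j.
Proof. by rewrite /extmx block_mxEul. Qed.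

Lemma extmx_lshift_newpt i : extmx A v (lshift 1 i) (newpt n) = false.
Proof. by rewrite /extmx block_mxEur mxE. Qed.

Lemma extmx_newpt_lshift j : extmx A v (newpt n) (lshift 1 j) = v ord0 j.
Proof. by rewrite /extmx block_mxEdl. Qed.

Lemma extmx_newpt : extmx A v (newpt n) (newpt n) = true.
Proof. by rewrite /extmx block_mxEdr mxE. Qed.

End ExtendedMatrix.

Definition extmxE :=
  (extmx_lshift, extmx_lshift_newpt, extmx_newpt_lshift, extmx_newpt).

Lemma extmx_poset_matrix n (A : 'M[bool]_n) (S : {set 'I_n}) :
  is_poset_matrix A -> is_order_ideal A S ->
  is_poset_matrix (extmx A (charvec S)).
Proof.
move=> [reflA antisymA transA natA] /forallP idealS.
split; apply: ord_addn1_ind => [i|]; rewrite ?extmxE //.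
- by apply: ord_addn1_ind => [j|]; rewrite ?extmxE // => Aij Aji;
    rewrite (antisymA _ _ Aij Aji).
- by apply: ord_addn1_ind => [j|]; rewrite ?extmxE.
- apply: ord_addn1_ind => [j|]; apply: ord_addn1_ind => [k|];
    rewrite ?extmxE //; exact: transA.
- apply: ord_addn1_ind => [j|]; apply: ord_addn1_ind => [k|];
    rewrite ?extmxE ?mxE // => Sj Ajk.
  by have /forallP/(_ k) := idealS j; rewrite Sj Ajk.
- by apply: ord_addn1_ind => [j|]; rewrite ?extmxE //; apply: natA.
- apply: ord_addn1_ind => [j|] _ //=.
  by rewrite addn0 ltnW.
Qed.

Section EmbeddedSets.

Variable n : nat.

Definition unembed (U : {set 'I_(n + 1)}) : {set 'I_n} :=
  [set i | lshift 1 i \in U].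

Lemma mem_embed (U : {set 'I_n}) i : (lshift 1 i \in embed U) = (i \in U).
Proof. exact: (mem_imset _ _ (@lshift_inj n 1)). Qed.

Lemma newpt_notin_embed (U : {set 'I_n}) : newpt n \notin embed U.
Proof. by apply/imsetP => -[i _ /eqP]; rewrite eq_rlshift. Qed.

Lemma embedK : cancel (@embed n) unembed.
Proof. by move=> U; apply/setP => i; rewrite inE mem_embed. Qed.

Lemma unembed_setU1_newpt (U : {set 'I_n}) : unembed (newpt n |: embed U) = U.
Proof. by apply/setP => i; rewrite !inE eq_lrshift mem_embed. Qed.

Lemma unembedK (U : {set 'I_(n + 1)}) :
  U = (if newpt n \in U then newpt n |: embed (unembed U)
       else embed (unembed U)).
Proof.
apply/setP; apply: ord_addn1_ind => [i|].
  by case: ifP => _; rewrite ?inE ?eq_lrshift mem_embed inE.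
by case: ifP => newU; rewrite ?inE ?eqxx (negbTE (newpt_notin_embed _)).
Qed.

End EmbeddedSets.

Lemma order_ideal_extmx n (A : 'M[bool]_n) (S : {set 'I_n}) U :
  is_order_ideal (extmx A (charvec S)) U =
  is_order_ideal A (unembed U) && ((newpt n \in U) ==> (S \subset unembed U)).
Proof.
apply/forallP/andP => [idealU | [/forallP idealUA subSU] k].
  split.
    apply/forallP => i; apply/forallP => j; rewrite !inE.
    by have /forallP/(_ (lshift 1 j)) := idealU (lshift 1 i); rewrite extmxE.
  apply/implyP => newU; apply/subsetP => j Sj; rewrite inE.
  have /forallP/(_ (lshift 1 j)) := idealU (newpt n).
  by rewrite extmxE mxE newU Sj.
apply/forallP; move: k; apply: ord_addn1_ind => [i|];
  apply: ord_addn1_ind => [j|]; rewrite ?extmxE ?andbF ?andbT //.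
- by have /forallP/(_ j) := idealUA i; rewrite !inE.
- rewrite mxE; apply/implyP => /andP[newU Sj].
  by have /subsetP/(_ j Sj) := implyP subSU newU; rewrite inE.
- exact: implybb.
Qed.

Lemma Grow_ideals n (A : 'M[bool]_n) (S : {set 'I_n}) :
  Grow S (ideals A) = ideals (extmx A (charvec S)).
Proof.
apply/setP => U; rewrite in_setU !inE order_ideal_extmx.
apply/orP/andP => [[] /imsetP[V] | [idealU subSU]].
- by rewrite inE => idealV ->; rewrite embedK (negbTE (newpt_notin_embed _)).
- rewrite !inE => /andP[idealV subSV] ->.
  by rewrite unembed_setU1_newpt setU11.
rewrite (unembedK U); case: ifP => newU; [right | left]; apply/imsetP;
  exists (unembed U) => //; rewrite !inE idealU //.
by rewrite (implyP subSU newU).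
Qed.

Theorem theorem5p9 (n : nat) (A : 'M[bool]_n) (S : {set 'I_n}) :
  is_poset_matrix A ->
  S \in ideals A ->
  is_poset_matrix (extmx A (charvec S)) /\
  Grow S (ideals A) = ideals (extmx A (charvec S)).
Proof.
move=> posetA; rewrite inE => idealS.
by split; [exact: extmx_poset_matrix | exact: Grow_ideals].
Qed.
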